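(* Let $I$ be a fuzzy implication function, $T$ a t-norm and $j\in\{1,\dots,n_c\}$. If $I$ satisfies the monotonicity of the generalized modus ponens with respect to $T$, i.e. $T(\tilde x,I(\tilde x,y))\le T(x,I(x,y))$ for all $x,\tilde x,y\in[0,1]$ with $\tilde x\le x$, then $FSupp(R^{S,L}_j)\ge FSupp(R^{\tilde S,\tilde L}_j)$ for all $R^{S,L}_j,R^{\tilde S,\tilde L}_j\in\mathcal{R}^{I,T}$ such that $R^{S,L}_j\prec R^{\tilde S,\tilde L}_j$.
   Context: A fuzzy implication function is a map $I:[0,1]^2\to[0,1]$ decreasing in the first variable, increasing in the second, with $I(0,0)=I(1,1)=1$, $I(1,0)=0$. A t-norm is a commutative, associative, increasing binary operation on $[0,1]$ with neutral element $1$. Setting: features $X_1,\dots,X_{n_f}$ with domains $D_m\subseteq\mathbb{R}$, target $Y$ with domain $D_Y$; examples $E=\{E^d=(e^d_1,\dots,e^d_{n_f},y^d):d=1,\dots,n_e\}$; each feature $X_m$ has labels $LL_m^1,\dots,LL_m^{l_m}$ with membership functions $\mu_{LL_m^n}:D_m\to[0,1]$; classes $\mathrm{Class}_1,\dots,\mathrm{Class}_{n_c}$ with $\mu_{\mathrm{Class}_j}:D_Y\to[0,1]$. A rule $R^{S,L}_j$ is given by a class index $j$, a set of features $S=\{X_{m_1},\dots,X_{m_s}\}$ and a set $L$ with exactly one label $LL^{n_{m_i}}_{m_i}$ per feature in $S$; $\mathcal{R}^{I,T}$ is the set of all such rules. For an example $E^d$: $\mu_{ant}^{R^{S,L}_j,E^d}=T(\mu_{LL^{n_{m_1}}_{m_1}}(e^d_{m_1}),\dots,\mu_{LL^{n_{m_s}}_{m_s}}(e^d_{m_s}))$,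 $\mu_{con}^{R^{S,L}_j,E^d}=\mu_{\mathrm{Class}_j}(y^d)$, $\mu_{eval}^{R^{S,L}_j,E^d}=T\big(\mu_{ant}^{R^{S,L}_j,E^d},I(\mu_{ant}^{R^{S,L}_j,E^d},\mu_{con}^{R^{S,L}_j,E^d})\big)$. The fuzzy support is $FSupp(R^{S,L}_j)=\frac{1}{|E|}\sum_{d=1}^{n_e}\mu_{eval}^{R^{S,L}_j,E^d}$. $R^{\tilde S,\tilde L}_{\tilde j}$ is a refinement of $R^{S,L}_j$, written $R^{S,L}_j\prec R^{\tilde S,\tilde L}_{\tilde j}$, iff $\tilde j=j$, $S\subsetneq\tilde S$, and every label of $L$ belongs to $\tilde L$. *)

From mathcomp Require Import all_boot all_order all_algebra.
Set Implicit Arguments. Unset Strict Implicit. Unset Printing Implicit Defensive.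
Import Order.TTheory GRing.Theory Num.Theory.
Local Open Scope ring_scope.

Section FuzzyDefs.
Variable R : realFieldType.

Definition in01 (x : R) : Prop := 0 <= x <= 1.

Definition is_tnorm (T : R -> R -> R) : Prop :=
  [/\ (forall x y, in01 x -> in01 y -> in01 (T x y)),
      (forall x y, in01 x -> in01 y -> T x y = T y x),
      (forall x y z, in01 x -> in01 y -> in01 z -> T x (T y z) = T (T x y) z),
      (forall x x' y y', in01 x -> in01 x' -> in01 y -> in01 y' ->
          x <= x' -> y <= y' -> T x y <= T x' y') &
      (forall x, in01 x -> T x 1 = x)].

Definition is_fuzzy_implication (I : R -> R -> R) : Prop :=
  [/\ (forall x y, in01 x -> in01 y -> in01 (I x y)),
      (forall x x' y, in01 x -> in01 x' -> in01 y -> x <= x' -> I x' y <= I x y),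
      (forall x y y', in01 x -> in01 y -> in01 y' -> y <= y' -> I x y <= I x y')
      & [/\ I 0 0 = 1, I 1 1 = 1 & I 1 0 = 0]].

Definition GMP_monotone (I T : R -> R -> R) : Prop :=
  forall x xt y, in01 x -> in01 xt -> in01 y -> xt <= x ->
    T xt (I xt y) <= T x (I x y).

Variables (nf : nat) (l : 'I_nf -> nat).

(* a label LL_m^n is encoded as the dependent pair (m, n) *)
Definition label := {m : 'I_nf & 'I_(l m)}.

Definition rule_wf (S : {set 'I_nf}) (L : {set label}) : Prop :=
  (forall p, p \in L -> tag p \in S) /\
  (forall m, m \in S -> #|[set p in L | tag p == m]| = 1%N).

Variable mu : forall m : 'I_nf, 'I_(l m) -> R -> R.

(* n-ary t-norm of the label memberships (T is commutative/associative with
   neutral element 1, so the fold order is immaterial) *)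
Definition mu_ant (T : R -> R -> R) (L : {set label}) (e : 'I_nf -> R) : R :=
  foldr (fun p acc => T (mu (tagged p) (e (tag p))) acc) 1 (enum L).

Definition mu_eval (I T : R -> R -> R) (L : {set label}) (e : 'I_nf -> R)
    (con : R) : R :=
  T (mu_ant T L e) (I (mu_ant T L e) con).

Variables (ne nc : nat) (ex : 'I_ne -> 'I_nf -> R) (ey : 'I_ne -> R)
  (muC : 'I_nc -> R -> R).

(* fuzzy support of the rule R_j^{S,L} (S is determined by L) *)
Definition FSupp (I T : R -> R -> R) (j : 'I_nc) (L : {set label}) : R :=
  (ne%:R)^-1 * \sum_(d < ne) mu_eval I T L (ex d) (muC j (ey d)).

Definition refines (S : {set 'I_nf}) (L : {set label})
    (S' : {set 'I_nf}) (L' : {set label}) : Prop :=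
  S \proper S' /\ L \subset L'.

End FuzzyDefs.

(* Adding labels to an antecedent adds factors to the t-norm defining its
   membership degree, and each extra factor can only decrease it, since
   T(a, b) <= T(1, b) = b.  Monotonicity of the generalized modus ponens then
   turns the smaller antecedent degree of the refined rule into a smaller
   evaluation on every example, hence into a smaller fuzzy support. *)
From mathcomp Require Import all_boot all_order all_algebra.
Import Order.TTheory GRing.Theory Num.Theory.
Local Open Scope ring_scope.

Section TnormFold.
Variables (R : realFieldType) (T : R -> R -> R).
Hypothesis tnormT : is_tnorm T.

Lemma in01_1 : in01 (1 : R).
Proof. by rewrite /in01 ler01 lexx. Qed.

Lemma tnorm_ler x y : in01 x -> in01 y -> T x y <= y.
Proof.
case: tnormT => _ TC _ Tmono T1 x01 y01.
have /andP[_ x_le1] := x01.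
rewrite -{2}(T1 y y01) TC //.
by apply: Tmono; rewrite ?lexx //; apply: in01_1.
Qed.

Section Fold.
Variables (X : Type) (g : X -> R).
Hypothesis g01 : forall x, in01 (g x).

Let tfold (s : seq X) := foldr (fun p acc => T (g p) acc) 1 s.

Lemma foldr_tnorm_in01 s : in01 (tfold s).
Proof.
case: tnormT => T01 _ _ _ _.
by elim: s => [|x s IHs] /=; [apply: in01_1 | apply: T01].
Qed.

Lemma foldr_tnorm_filter (P : pred X) s : tfold s <= tfold (filter P s).
Proof.
case: tnormT => _ _ _ Tmono _.
elim: s => [|x s IHs] //=; case: (P x) => /=.
  by apply: Tmono; rewrite ?lexx //; apply: foldr_tnorm_in01.
by apply: le_trans IHs; apply: tnorm_ler => //; apply: foldr_tnorm_in01.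
Qed.

End Fold.
End TnormFold.

Lemma enum_subset {X : finType} {A B : {set X}} :
  A \subset B -> enum A = [seq x <- enum B | x \in A].
Proof.
move=> sAB; rewrite /enum_mem -filter_predI; apply: eq_filter => x /=.
by case Ax: (x \in A); rewrite // (subsetP sAB x Ax).
Qed.

Section Antecedent.
Variables (R : realFieldType) (nf : nat) (l : 'I_nf -> nat).
Variable mu : forall m : 'I_nf, 'I_(l m) -> R -> R.
Variables (T : R -> R -> R) (e : 'I_nf -> R).
Hypothesis tnormT : is_tnorm T.
Hypothesis mu01 : forall p : label l, in01 (mu (tag p) (tagged p) (e (tag p))).

Lemma mu_ant_in01 (L : {set label l}) : in01 (mu_ant mu T L e).
Proof. exact: foldr_tnorm_in01. Qed.

Lemma mu_ant_subset (L Lt : {set label l}) :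
  L \subset Lt -> mu_ant mu T Lt e <= mu_ant mu T L e.
Proof. by move=> sLLt; rewrite /mu_ant (enum_subset sLLt) foldr_tnorm_filter. Qed.

Lemma mu_eval_subset (I : R -> R -> R) (L Lt : {set label l}) con :
  GMP_monotone I T -> in01 con -> L \subset Lt ->
  mu_eval mu I T Lt e con <= mu_eval mu I T L e con.
Proof.
move=> GMP con01 sLLt.
by apply: GMP; [exact: mu_ant_in01 | exact: mu_ant_in01 | | exact: mu_ant_subset].
Qed.

End Antecedent.

Lemma FSupp_subset (R : realFieldType) (nf : nat) (l : 'I_nf -> nat)
    (mu : forall m : 'I_nf, 'I_(l m) -> R -> R) (ne nc : nat)
    (ex : 'I_ne -> 'I_nf -> R) (ey : 'I_ne -> R) (muC : 'I_nc -> R -> R)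
    (I T : R -> R -> R) (j : 'I_nc) (L Lt : {set label l}) :
  is_tnorm T -> GMP_monotone I T ->
  (forall d (p : label l), in01 (mu (tag p) (tagged p) (ex d (tag p)))) ->
  (forall d, in01 (muC j (ey d))) ->
  L \subset Lt -> FSupp mu ex ey muC I T j Lt <= FSupp mu ex ey muC I T j L.
Proof.
move=> tnormT GMP mu01 muC01 sLLt.
rewrite /FSupp ler_wpM2l ?invr_ge0 ?ler0n //.
by apply: ler_sum => d _; apply: mu_eval_subset.
Qed.

Theorem proposition8 (R : realFieldType) (nf : nat) (D : 'I_nf -> pred R)
  (l : 'I_nf -> nat) (mu : forall m : 'I_nf, 'I_(l m) -> R -> R)
  (nc : nat) (DY : pred R) (muC : 'I_nc -> R -> R)
  (ne : nat) (ex : 'I_ne -> 'I_nf -> R) (ey : 'I_ne -> R)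
  (I T : R -> R -> R) (j : 'I_nc) :
  (forall m (n : 'I_(l m)) x, D m x -> in01 (mu m n x)) ->
  (forall c x, DY x -> in01 (muC c x)) ->
  (forall d m, D m (ex d m)) ->
  (forall d, DY (ey d)) ->
  is_fuzzy_implication I -> is_tnorm T ->
  GMP_monotone I T ->
  forall (S St : {set 'I_nf}) (L Lt : {set label l}),
    rule_wf S L -> rule_wf St Lt ->
    refines S L St Lt ->
    FSupp mu ex ey muC I T j Lt <= FSupp mu ex ey muC I T j L.
Proof.
move=> mu01 muC01 exD eyDY _ tnormT GMP S St L Lt _ _ [_ sLLt].
apply: FSupp_subset => // [d p|d]; first exact: mu01 (exD d (tag p)).
exact: muC01 (eyDY d).
Qed.
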